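(* Let $p$ be an odd prime, $n,k$ positive integers, $d=\frac{p^k+1}{2}$ and $F(x)=x^d$ on $\mathrm{GF}(p^n)$. Then $F$ is perfect $c$-nonlinear for $c=-1$ if and only if $\frac{k}{\gcd(k,n)}$ is even.
   Context: For a function $F:\mathrm{GF}(p^n)\to\mathrm{GF}(p^n)$ and $a,b,c\in\mathrm{GF}(p^n)$, let ${}_c\Delta_F(a,b)=\#\{x\in\mathrm{GF}(p^n): F(x+a)-cF(x)=b\}$. The $c$-differential uniformity of $F$ is ${}_c\Delta_F=\max\{{}_c\Delta_F(a,b): a,b\in\mathrm{GF}(p^n),\ \text{and } a\neq 0 \text{ if } c=1\}$. $F$ is perfect $c$-nonlinear (P$c$N) if ${}_c\Delta_F=1$. *)

From HB Require Import structures.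
From mathcomp Require Import all_boot all_order all_algebra all_field.
Set Implicit Arguments. Unset Strict Implicit. Unset Printing Implicit Defensive.
Import GRing.Theory.
Local Open Scope ring_scope.

Definition cDelta (F : finFieldType) (f : F -> F) (c a b : F) : nat :=
  #|[set x : F | f (x + a) - c * f x == b]|.

Definition cDiffUnif (F : finFieldType) (f : F -> F) (c : F) : nat :=
  (\max_(ab : F * F | (c != (1%R : F)) || (ab.1 != (0%R : F))) cDelta f c ab.1 ab.2)%N.

Definition PcN (F : finFieldType) (f : F -> F) (c : F) : Prop :=
  cDiffUnif f c = 1%N.

From HB Require Import structures.
From mathcomp Require Import all_boot all_order all_algebra all_field.
From mathcomp Require Import ring zify.
Set Implicit Arguments.
Unset Strict Implicit.
Unset Printing Implicit Defensive.
Import GRing.Theory.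
Local Open Scope ring_scope.

(* With c = -1, perfect c-nonlinearity of x^d means that x |-> (x + a)^d + x^d is injective
   for every a.  For a = 0 this is injectivity of x^d; for a <> 0 scaling reduces it to
   G(x) = (x + 1)^d + x^d.  In an algebraic closure write 4x + 2 = V + V^-1: then
   2 G(x) = V^d + V^-d, and V is fixed by the p^(2n)-th power map since V + V^-1 lies in F.
   Hence G(x) = G(y) forces r^d = 1 for r = V_x / V_y or V_x V_y, an element fixed by the
   p^(2n)-th power map; such an r is 1 when k/gcd(k,n) is even.  When k/gcd(k,n) is odd,
   V = s^2 with s^(p^m + 1) = 1, s^2 <> 1, m = gcd(k,n), satisfies V^d = 1 and V <> 1, and
   gives a nonzero x with G(x) = 1 = G(0). *)

Local Notation dexp p k := ((p ^ k).+1 %/ 2)%N.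

Lemma PcN_injectiveP (F : finFieldType) (f : F -> F) (c : F) : c != 1 ->
  PcN f c <-> forall a, injective (fun x => f (x + a) - c * f x).
Proof.
move=> c1; rewrite /PcN /cDiffUnif.
have P_all (ab : F * F) : (c != 1) || (ab.1 != 0) by rewrite c1.
have card_le1P a :
    (forall b, cDelta f c a b <= 1)%N <-> injective (fun x => f (x + a) - c * f x).
  split=> [le1 x y gxy | inj b]; last first.
    by apply/card_le1_eqP => x y; rewrite !inE => /eqP <- /eqP /inj.
  by have /card_le1_eqP := le1 (f (y + a) - c * f y); apply; rewrite inE ?gxy.
split=> [max1 a | inj].
  apply: (card_le1P a).1 => b; rewrite -max1; exact: (leq_bigmax_cond (a, b) (P_all _)).
apply/eqP; rewrite eqn_leq; apply/andP; split.
  by apply/bigmax_leqP => -[a b] _; apply: (card_le1P a).2.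
apply: leq_trans (leq_bigmax_cond (0, f (0 + 0) - c * f 0) (P_all _)).
by rewrite card_gt0; apply/set0Pn; exists 0; rewrite inE.
Qed.

Lemma dexp_mul2 p k : odd p -> (dexp p k * 2 = (p ^ k).+1)%N.
Proof. by move=> op; rewrite divnK // dvdn2 /= oddX op orbT. Qed.

Lemma dexp_gt0 p k : odd p -> (0 < dexp p k)%N.
Proof. by move=> op; have := dexp_mul2 k op; lia. Qed.

Lemma odd_dexp p k : odd p -> ~~ odd k -> odd (dexp p k).
Proof.
move=> op /negbTE ek.
have -> : (p ^ k = (p ^ k./2) ^ 2)%N.
  by rewrite -expnM muln2 -{1}(odd_double_half k) ek.
have := odd_double_half (p ^ k./2); rewrite oddX op orbT => <-.
set h := (p ^ k./2)./2.
have -> : (((true + h.*2) ^ 2).+1 %/ 2 = (h * h + h).*2.+1)%N by nia.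
by rewrite /= odd_double.
Qed.

Lemma expr_expn_fix (R : pzRingType) (x : R) e j : x ^+ e = x -> x ^+ (e ^ j) = x.
Proof. by move=> xe; elim: j => [|j IH]; rewrite ?expr1 // expnSr exprM IH. Qed.

Lemma expr_expn_gcd_fix (R : pzRingType) (x : R) q a b :
  x ^+ (q ^ a) = x -> x ^+ (q ^ b) = x -> x ^+ (q ^ gcdn a b) = x.
Proof.
move=> xa xb; have [-> | a0] := posnP a; first by rewrite gcd0n.
have [c _ /dvdnP[e ec]] := Bezoutl b a0.
have xgb : (x ^+ (q ^ gcdn a b)) ^+ (q ^ b) = x ^+ (q ^ gcdn a b).
  by rewrite -exprM mulnC exprM xb.
rewrite -[RHS](expr_expn_fix e xa) -expnM mulnC -ec expnD exprM.
by rewrite [(c * b)%N]mulnC expnM (expr_expn_fix c xgb).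
Qed.

Lemma expr_expn_inv (L : fieldType) (x : L) e j :
  x ^+ e = x^-1 -> x ^+ (e ^ j) = if odd j then x^-1 else x.
Proof.
move=> xe; elim: j => [|j IH]; first by rewrite expr1.
by rewrite expnSr exprM IH /=; case: (odd j); rewrite ?exprVn xe ?invrK.
Qed.

Lemma addfV_eq (L : fieldType) (s t : L) : s != 0 -> t != 0 ->
  s + s^-1 = t + t^-1 -> s = t \/ s = t^-1.
Proof.
move=> s0 t0 st.
have : (s - t) * (s * t - 1) == 0.
  have -> : (s - t) * (s * t - 1) = s * t * ((s + s^-1) - (t + t^-1)).
    by field; rewrite s0 t0.
  by rewrite st subrr mulr0.
rewrite mulf_eq0 !subr_eq0 => /orP[/eqP | /eqP st1]; first by left.
by right; rewrite -[s](mulfK t0) st1 div1r.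
Qed.

(* r^(p^k) = r^-1, so r is fixed by the p^(2k)- and p^(2n)-th power maps, hence by the
   p^(2 gcd(k,n))-th one, and p^k is a power of p^(2 gcd(k,n)) when k/gcd(k,n) is even. *)
Lemma dexp_root_eq1 (L : fieldType) p k n (r : L) :
  odd p -> ~~ odd (k %/ gcdn k n) ->
  r ^+ dexp p k = 1 -> r ^+ ((p ^ 2) ^ n) = r -> r = 1.
Proof.
move=> op ev rd rn; set m := gcdn k n.
have rk1 : r * r ^+ (p ^ k) = 1.
  by rewrite -exprS -(dexp_mul2 k op) exprM rd expr1n.
have rkV : r ^+ (p ^ k) = r^-1 := esym (mulr1_eq rk1).
have r2k : r ^+ ((p ^ 2) ^ k) = r.
  by rewrite -expnM mulnC expnM exprM rkV exprVn rkV invrK.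
have /dvdnP[j kj] : (2 %| k %/ m)%N by rewrite dvdn2.
have ek : ~~ odd k by rewrite -(divnK (dvdn_gcdl k n)) kj !oddM andbF.
have rk : r ^+ (p ^ k) = r.
  rewrite -(divnK (dvdn_gcdl k n)) -/m kj (mulnC j) -mulnA expnM (mulnC j) expnM.
  exact/expr_expn_fix/(expr_expn_gcd_fix r2k rn).
have r21 : r ^+ 2 = 1 by rewrite expr2 -{2}rk rk1.
have := odd_double_half (dexp p k); rewrite odd_dexp // => hd.
by rewrite -rd -hd exprD expr1 -mul2n exprM r21 expr1n mulr1.
Qed.

Lemma two_neq0_pchar (R : nzRingType) p : p \in [pchar R] -> odd p -> 2%:R != 0 :> R.
Proof.
move=> pchR op; rewrite -(dvdn_pcharf pchR) dvdn_prime2 ?(pcharf_prime pchR) //.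
by apply: contraTneq op => ->.
Qed.

Lemma four_neq0_pchar (R : idomainType) p : p \in [pchar R] -> odd p -> 4%:R != 0 :> R.
Proof. by move=> pchR op; rewrite (natrM _ 2 2) mulf_neq0 ?(two_neq0_pchar pchR). Qed.

Lemma expn2X p n : ((p ^ 2) ^ n = p ^ n * p ^ n)%N.
Proof. by rewrite -expnD -expnM mul2n addnn. Qed.

Section OddCharacteristic.
Variables (L : fieldType) (p : nat).
Hypotheses (pchL : p \in [pchar L]) (op : odd p).

Let pnat_pchar j : [pchar L].-nat (p ^ j)%N.
Proof. by rewrite (eq_pnat _ (pcharf_eq pchL)) pnatX pnat_id ?(pcharf_prime pchL). Qed.

Lemma addfV_expn j (t : L) : (t + t^-1) ^+ (p ^ j) = t ^+ (p ^ j) + (t ^+ (p ^ j))^-1.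
Proof. by rewrite exprDn_pchar // exprVn. Qed.

Lemma addfV_expn_fix n (t : L) : t != 0 ->
  (t + t^-1) ^+ (p ^ n) = t + t^-1 -> t ^+ ((p ^ 2) ^ n) = t.
Proof.
move=> t0; rewrite addfV_expn expn2X exprM.
by case/addfV_eq; rewrite ?expf_neq0 // => tn; rewrite tn ?exprVn tn ?invrK.
Qed.

(* X = (V - 1)^2 / 4V and X + 1 = (V + 1)^2 / 4V; with q = p^k, raising to d = (q + 1)/2
   uses (V +- 1)^(q + 1) = (V^q +- 1)(V +- 1) and 4^d = 2^(q + 1) = 4. *)
Lemma dexp_sum_addfV k (X V : L) : V != 0 -> 4%:R * X + 2%:R = V + V^-1 ->
  (X + 1) ^+ dexp p k + X ^+ dexp p k = (V ^+ dexp p k + (V ^+ dexp p k)^-1) / 2%:R.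
Proof.
move=> V0 hX; have two0 := two_neq0_pchar pchL op.
have four0 := four_neq0_pchar pchL op.
set q := (p ^ k)%N; set W := V ^+ dexp p k.
have dq : (dexp p k * 2 = q.+1)%N := dexp_mul2 k op.
have W2 : W ^+ 2 = V ^+ q * V by rewrite -exprM dq exprSr.
have four_d : 4%:R ^+ dexp p k = 4%:R :> L.
  rewrite -[4%:R]/((2 ^ 2)%:R : L) natrX -exprM mulnC dq exprSr.
  by rewrite mulr2n exprDn_pchar ?pnat_pchar // expr1n expr2.
have sqr_dexp (Y : L) : (Y ^+ 2 / (4%:R * V)) ^+ dexp p k = Y ^+ q * Y / (4%:R * W).
  by rewrite expr_div_n -exprM mulnC dq exprSr exprMn four_d.
have eX : X = (V + V^-1 - 2%:R) / 4%:R by rewrite -hX; field.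
have eX1 : X + 1 = (V + 1) ^+ 2 / (4%:R * V) by rewrite eX; field; rewrite four0 V0.
have eX0 : X = (V - 1) ^+ 2 / (4%:R * V) by rewrite eX; field; rewrite four0 V0.
rewrite eX1 eX0 !sqr_dexp !exprDn_pchar ?pnat_pchar //.
rewrite exprNn_pchar ?pnat_pchar // expr1n -mulrDl.
have -> : (V ^+ q + 1) * (V + 1) + (V ^+ q - 1) * (V - 1) = 2%:R * (W ^+ 2 + 1).
  by rewrite W2; ring.
by field; rewrite two0 four0 expf_neq0.
Qed.

End OddCharacteristic.

Lemma exists_sqr (L : closedFieldType) (c : L) : exists u, u ^+ 2 = c.
Proof.
have [u hu] := @solve_monicpoly L 2 (fun i => if i == 0%N then c else 0) isT.
by exists u; rewrite hu !big_ord_recl big_ord0 /= mulr1 mul0r !addr0.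
Qed.

Lemma exists_addfV_eq (L : closedFieldType) (c : L) : exists2 V, V != 0 & V + V^-1 = c.
Proof.
have [V hV] := @solve_monicpoly L 2 (fun i => if i == 0%N then -1 else c) isT.
have {}hV : V ^+ 2 = c * V - 1.
  by rewrite hV !big_ord_recl big_ord0 /= mulr1 addr0 addrC.
have V0 : V != 0.
  by apply: contra_eq_neq hV => ->; rewrite expr0n mulr0 sub0r eq_sym oppr_eq0 oner_neq0.
exists V => //; apply: (mulIf V0); rewrite mulrDl mulVf // -expr2 hV; ring.
Qed.

Lemma exists_root1_neq1 (L : closedFieldType) r : (1 < r)%N -> r%:R != 0 :> L ->
  exists2 v : L, v ^+ r = 1 & v != 1.
Proof.
move=> r1 r0; have r10 : (0 < r.-1)%N by rewrite -subn1 subn_gt0.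
have [v hv] := @solve_monicpoly L r.-1 (fun _ => -1) r10.
have sum0 : \sum_(i < r) v ^+ i = 0.
  rewrite -(ltn_predK r1) big_ord_recr /= hv -big_split big1 // => i _.
  by rewrite /= mulN1r subrr.
exists v; first by apply/eqP; rewrite -subr_eq0 subrX1 sum0 mulr0.
apply: contra_neq r0 => v1; rewrite -sum0 v1.
by under eq_bigr do rewrite expr1n; rewrite sumr_const card_ord.
Qed.

(* s is a square root of a nontrivial ((p^m + 1)/2)-th root of unity, which exists because
   p does not divide (p^m + 1)/2. *)
Lemma exists_expnS_root1 (L : closedFieldType) p m :
  p \in [pchar L] -> odd p -> (0 < m)%N -> exists2 s : L, s ^+ (p ^ m).+1 = 1 & s ^+ 2 != 1.
Proof.
move=> pchL op m0; have pp := pcharf_prime pchL.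
have dm := dexp_mul2 m op.
have r1 : (1 < dexp p m)%N.
  have : (p <= p ^ m)%N by rewrite -{1}(expn1 p); exact: leq_pexp2l (prime_gt0 pp) m0.
  have := odd_prime_gt2 op pp; lia.
have r0 : (dexp p m)%:R != 0 :> L.
  rewrite -(dvdn_pcharf pchL); apply: contraL (prime_gt1 pp) => /(dvdn_mulr 2).
  by rewrite dm -addn1 dvdn_addr ?dvdn_exp // dvdn1 => /eqP ->.
have [v v1 vn1] := exists_root1_neq1 r1 r0; have [s sv] := exists_sqr v.
exists s; last by rewrite sv.
by rewrite -dm mulnC exprM sv v1.
Qed.

Section FiniteSubfield.
Variables (F : finFieldType) (L : closedFieldType) (iota : {rmorphism F -> L}).
Variables (p n k : nat).
Hypotheses (pchF : p \in [pchar F]) (op : odd p) (cardF : #|F| = (p ^ n)%N).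

Let pchL : p \in [pchar L] := rmorph_pchar iota pchF.

Lemma rmorph_expn_card (c : F) : iota c ^+ (p ^ n) = iota c.
Proof. by rewrite -rmorphXn -cardF expf_card. Qed.

Lemma image_of_expn_card_fixed (t : L) : t ^+ (p ^ n) = t -> exists c, iota c = t.
Proof.
move=> tq; have /(congr1 (map_poly iota)) := finField_genPoly F.
rewrite rmorphB /= map_polyXn map_polyX rmorph_prod /=.
under eq_bigr do rewrite rmorphB /= map_polyX map_polyC.
move=> /(congr1 (root^~ t)); rewrite rootE !hornerE cardF tq subrr eqxx.
rewrite -big_enum -(big_map iota xpredT (fun a => 'X - a%:P)) root_prod_XsubC.
by move=> /esym/mapP[c _ ->]; exists c.
Qed.

Lemma exists_addfV_fixed (x : F) :
  exists V : L, [/\ V != 0, 4%:R * iota x + 2%:R = V + V^-1 & V ^+ ((p ^ 2) ^ n) = V].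
Proof.
have [V V0 hV] := exists_addfV_eq (4%:R * iota x + 2%:R).
exists V; split => //; apply: addfV_expn_fix => //.
by rewrite hV -!(rmorph_nat iota) -rmorphM -rmorphD rmorph_expn_card.
Qed.

Lemma dexp_sum_inj : ~~ odd (k %/ gcdn k n) ->
  injective (fun x : F => (x + 1) ^+ dexp p k + x ^+ dexp p k).
Proof.
move=> ev x y /(congr1 iota); rewrite !rmorphD !rmorphXn !rmorphD rmorph1.
have [Vx [Vx0 hx fx]] := exists_addfV_fixed x.
have [Vy [Vy0 hy fy]] := exists_addfV_fixed y.
rewrite (dexp_sum_addfV pchL op k Vx0 hx) (dexp_sum_addfV pchL op k Vy0 hy).
move=> /(mulIf (invr_neq0 (two_neq0_pchar pchL op))) eW.
suff eV : Vx + Vx^-1 = Vy + Vy^-1.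
  apply: (fmorph_inj iota); apply: (mulfI (four_neq0_pchar pchL op)).
  by apply: (addIr 2%:R); rewrite hx hy.
case/addfV_eq: eW; rewrite ?expf_neq0 // => e.
  suff -> : Vx = Vy by [].
  apply: divr1_eq; apply: (dexp_root_eq1 op ev).
    by rewrite exprMn exprVn e divff ?expf_neq0.
  by rewrite exprMn exprVn fx fy.
have r1 : Vy * Vx = 1.
  apply: (dexp_root_eq1 op ev); first by rewrite exprMn e mulfV ?expf_neq0.
  by rewrite exprMn fx fy.
by rewrite -(mulr1_eq r1) invrK addrC.
Qed.

Lemma dexp_sum_collision : odd (k %/ gcdn k n) ->
  exists2 x : F, x != 0 & (x + 1) ^+ dexp p k + x ^+ dexp p k = 1.
Proof.
move=> ok; have m0 : (0 < gcdn k n)%N.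
  by rewrite gcdn_gt0; case: (k) ok => [|k1]; rewrite ?div0n.
set m := gcdn k n.
have [s s1 s2] := exists_expnS_root1 pchL op m0.
have s0 : s != 0 by apply: contra_eq_neq s1 => ->; rewrite expr0n /= eq_sym oner_neq0.
have sm : s ^+ (p ^ m) = s^-1 by apply/esym/mulr1_eq; rewrite -exprS.
have s_pow j : (m %| j)%N -> s ^+ (p ^ j) = if odd (j %/ m) then s^-1 else s.
  by move=> mj; rewrite -{1}(divnK mj) mulnC expnM; apply: expr_expn_inv.
have sk : s ^+ (p ^ k) = s^-1 by rewrite s_pow ?dvdn_gcdl ?ok.
have sn := s_pow n (dvdn_gcdr k n).
set V := s ^+ 2.
have V0 : V != 0 by rewrite expf_neq0.
have [c hc] : exists c, iota c = V + V^-1.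
  apply: image_of_expn_card_fixed; rewrite addfV_expn // exprAC sn.
  by case: ifP; rewrite ?exprVn ?invrK // addrC.
have Vd : V ^+ dexp p k = 1 by rewrite -exprM mulnC (dexp_mul2 k op) exprS sk mulfV.
have hx : 4%:R * iota ((c - 2%:R) / 4%:R) + 2%:R = V + V^-1.
  by rewrite fmorph_div rmorphB !rmorph_nat -hc; field; rewrite (four_neq0_pchar pchL op).
exists ((c - 2%:R) / 4%:R).
  apply: contraNneq s2 => x0; move: hx; rewrite x0 rmorph0 mulr0 add0r.
  rewrite -[2%:R]/(1 + 1 : L) -{2}invr1.
  by case/addfV_eq; rewrite ?oner_neq0 // => /esym/eqP; rewrite ?invr_eq1.
apply: (fmorph_inj iota); rewrite !rmorphD !rmorphXn !rmorphD rmorph1.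
rewrite (dexp_sum_addfV pchL op k V0 hx) Vd invr1.
by rewrite -[1 + 1]/(2%:R : L) divff ?(two_neq0_pchar pchL op).
Qed.
End FiniteSubfield.

Lemma dexp_inj (F : finFieldType) p n k : odd p -> #|F| = (p ^ n)%N ->
  ~~ odd (k %/ gcdn k n) -> injective (fun x : F => x ^+ dexp p k).
Proof.
move=> op cardF ev x y /= xy; have d0 := dexp_gt0 k op.
have [y0 | y0] := eqVneq y 0.
  by move/eqP: xy; rewrite y0 expr0n (gtn_eqF d0) expf_eq0 d0 => /eqP.
apply: divr1_eq; apply: (dexp_root_eq1 op ev).
  by rewrite expr_div_n xy divff ?expf_neq0.
by rewrite expn2X exprM -cardF !expf_card.
Qed.

Lemma powsum_inj_scale (F : fieldType) d (a : F) : a != 0 ->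
  injective (fun x : F => (x + 1) ^+ d + x ^+ d) ->
  injective (fun x : F => (x + a) ^+ d + x ^+ d).
Proof.
move=> a0 inj1.
have scale z : (z + a) ^+ d + z ^+ d = ((z / a + 1) ^+ d + (z / a) ^+ d) * a ^+ d.
  by rewrite mulrDl -!exprMn mulrDl mul1r divfK.
move=> x y; rewrite /= !scale => /(mulIf (expf_neq0 d a0)) /inj1.
exact: (mulIf (invr_neq0 a0)).
Qed.

Theorem theorem3 (F : finFieldType) (p n k : nat) :
  prime p -> odd p -> p \in [pchar F] -> #|F| = (p ^ n)%N ->
  (0 < n)%N -> (0 < k)%N ->
  PcN (fun x : F => x ^+ ((p ^ k).+1 %/ 2)) (-1) <-> ~~ odd (k %/ gcdn k n).
Proof.
move=> _ op pchF cardF _ _.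
have [L [iota _]] := countable_algebraic_closure F.
have sumE a : (fun x : F => (x + a) ^+ dexp p k + x ^+ dexp p k)
    =1 (fun x => (x + a) ^+ dexp p k - (-1) * x ^+ dexp p k).
  by move=> x; rewrite mulN1r opprK.
rewrite PcN_injectiveP; last by rewrite eq_sym -subr_eq0 opprK (two_neq0_pchar pchF op).
split => [inj | ev a].
  apply/negP => ok; have [x x0 Gx] := dexp_sum_collision iota pchF op cardF ok.
  have G_inj := eq_inj (inj 1) (fsym (sumE 1)).
  move: x0; rewrite (G_inj x 0) ?eqxx //= Gx add0r expr1n expr0n.
  by rewrite (gtn_eqF (dexp_gt0 k op)) addr0.
apply: eq_inj (sumE a); have [-> | a0] := eqVneq a 0.
  move=> x y; rewrite /= !addr0 -!mulr2n -!(mulr_natl (_ ^+ _)).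
  by move=> /(mulfI (two_neq0_pchar pchF op)) /(dexp_inj op cardF ev).
exact: powsum_inj_scale a0 (dexp_sum_inj iota pchF op cardF ev).
Qed.
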